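(* There is a constant $b>0$ such that $|X^{(j)}_k(x)|\le b^{k+j}|x|^j$ for all $x\in\mathbb R^{n+1}$ and all $k,j\in\mathbb N_0$.
   Context: $\mathbb R_n$ is the real Clifford algebra generated by $e_1,\dots,e_n$ with $e_ie_j+e_je_i=-2\delta_{ij}$, and $|\cdot|$ is the Euclidean norm on $\mathbb R_n\cong\mathbb R^{2^n}$. A point $x=(x_0,\underline x)\in\mathbb R^{n+1}$ is identified with $x_0+\underline x$, $\underline x=\sum_jx_je_j$, and $|x|^2=x_0^2+|\underline x|^2$. The Gegenbauer polynomials are $C^\nu_j(z)=\sum_{i=0}^{[j/2]}\frac{(-1)^i(\nu)_{j-i}}{i!(j-2i)!}(2z)^{j-2i}$ with $(\nu)_j=\nu(\nu+1)\cdots(\nu+j-1)$. Set $X^{(0)}_k=1$ and for $j\in\mathbb N$ $$X^{(j)}_k(x)=\mu^j_k|x|^j\Big(C^{(n-1)/2+k}_j\big(\tfrac{x_0}{|x|}\big)+\frac{n+2k-1}{n+2k+j-1}C^{(n+1)/2+k}_{j-1}\big(\tfrac{x_0}{|x|}\big)\frac{\underline x}{|x|}\Big),$$ where $\mu^{2l}_k=(-1)^l\big(C^{(n-1)/2+k}_{2l}(0)\big)^{-1}$ and $\mu^{2l+1}_k=(-1)^l\frac{n+2k+2l}{n+2k-1}\big(C^{(n+1)/2+k}_{2l}(0)\big)^{-1}$. (For a spherical monogenic $P_k$ of degree $k$, $X^{(j)}_k(x)P_k(\underline x)$ is the monogenic extension of $\underline x^jP_k(\underline x)$.) *)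

From Stdlib Require Import Arith Reals Lra Lia.
Open Scope R_scope.

Fixpoint sum_lt (m : nat) (f : nat -> R) : R :=
  match m with O => 0 | S m' => sum_lt m' f + f m' end.

Fixpoint poch (nu : R) (m : nat) : R :=
  match m with O => 1 | S m' => poch nu m' * (nu + INR m') end.

Definition gegen (nu : R) (j : nat) (z : R) : R :=
  sum_f_R0 (fun i => (-1) ^ i * poch nu (j - i) / (INR (fact i) * INR (fact (j - 2 * i)))
                        * (2 * z) ^ (j - 2 * i)) (Nat.div2 j).

(* A point x = (x0, x_1..x_n) of R^{n+1}: x0 : R and xv : nat -> R (only xv 0 .. xv (n-1) used,
   xv i is the coordinate x_{i+1}, coefficient of e_{i+1}). *)
Definition normx (n : nat) (x0 : R) (xv : nat -> R) : R :=
  sqrt (x0 ^ 2 + sum_lt n (fun i => xv i ^ 2)).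

(* Euclidean norm on R_n ~ R^{2^n} of a paravector a0 + sum_i v_i e_{i+1}: all other
   coordinates (basis blades e_A with |A| >= 2) vanish, so the norm is this. *)
Definition paranorm (n : nat) (a0 : R) (v : nat -> R) : R :=
  sqrt (a0 ^ 2 + sum_lt n (fun i => v i ^ 2)).

Definition mu (n k j : nat) : R :=
  let l := Nat.div2 j in
  if Nat.even j then (-1) ^ l / gegen ((INR n - 1) / 2 + INR k) (2 * l) 0
  else (-1) ^ l * (INR n + 2 * INR k + 2 * INR l) / (INR n + 2 * INR k - 1)
       / gegen ((INR n + 1) / 2 + INR k) (2 * l) 0.

(* X^{(j)}_k(x) as a paravector: scalar part and e_{i+1}-coefficients *)
Definition Xscal (n k j : nat) (x0 : R) (xv : nat -> R) : R :=
  match j with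
  | O => 1
  | S _ => mu n k j * normx n x0 xv ^ j
             * gegen ((INR n - 1) / 2 + INR k) j (x0 / normx n x0 xv)
  end.

Definition Xvec (n k j : nat) (x0 : R) (xv : nat -> R) (i : nat) : R :=
  match j with
  | O => 0
  | S j' => mu n k j * normx n x0 xv ^ j
             * ((INR n + 2 * INR k - 1) / (INR n + 2 * INR k + INR j - 1))
             * gegen ((INR n + 1) / 2 + INR k) j' (x0 / normx n x0 xv)
             * (xv i / normx n x0 xv)
  end.

Definition normX (n k j : nat) (x0 : R) (xv : nat -> R) : R :=
  paranorm n (Xscal n k j x0 xv) (Xvec n k j x0 xv).

From Stdlib Require Import Arith Reals Lra Lia Psatz.
Open Scope R_scope.

(* With [t = x0/|x|] in [-1, 1], each of the at most [2^j] terms of [C^nu_j(t)] is bounded by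
   [2^N 8^j] whenever [0 <= nu <= N]: the Pochhammer symbol satisfies [(nu)_m <= m! 2^(N+m)],
   and [(i+m)!/(i! m!) <= 2^(i+m)].  For the normalisation, [C^nu_(2l)(0) = (-1)^l (nu)_l / l!]
   and [l! <= 2^l (nu)_l] for [nu >= 1/2], so [|mu^j_k| <= n 8^(k+j)].  Both parts of
   [X^(j)_k] are therefore at most [n 2^n 128^(k+j) |x|^j], and [b = 256 n 2^n] works. *)

Lemma poch_ge0 a m : 0 <= a -> 0 <= poch a m.
Proof.
  intros Ha; induction m as [|m IH]; simpl; [lra|].
  apply Rmult_le_pos; [exact IH|]. pose proof (pos_INR m); lra.
Qed.

Lemma poch_le_compat a b m : 0 <= a -> a <= b -> poch a m <= poch b m.
Proof.
  intros Ha Hab; induction m as [|m IH]; simpl; [lra|].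
  pose proof (pos_INR m).
  apply Rmult_le_compat; auto using poch_ge0; lra.
Qed.

Lemma poch_S_shift a m : poch a (S m) = a * poch (a + 1) m.
Proof.
  induction m as [|m IH]; [simpl; ring|].
  change (poch a (S (S m))) with (poch a (S m) * (a + INR (S m))).
  change (poch (a + 1) (S m)) with (poch (a + 1) m * (a + 1 + INR m)).
  rewrite IH, S_INR. ring.
Qed.

Lemma poch_S_base a m : poch (a + 1) (S m) = poch a (S m) + INR (S m) * poch (a + 1) m.
Proof.
  rewrite (poch_S_shift a m), S_INR.
  change (poch (a + 1) (S m)) with (poch (a + 1) m * (a + 1 + INR m)). ring.
Qed.

(* [(N)_m = m! binom(N+m-1, m)] and a binomial coefficient is at most [2^(N+m)]; the proof
   runs a Pascal-type double induction through [poch_S_base]. *)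
Lemma poch_INR_le N m : poch (INR N) m <= INR (fact m) * 2 ^ (N + m).
Proof.
  revert m; induction N as [|N IHN]; intro m.
  - destruct m as [|m]; [simpl; lra|].
    rewrite poch_S_shift, INR_0, Rmult_0_l.
    apply Rmult_le_pos; [apply pos_INR | apply pow_le; lra].
  - induction m as [|m IHm].
    + rewrite Nat.add_0_r. simpl (poch _ 0); simpl (INR (fact 0)).
      pose proof (pow_R1_Rle 2 (S N)). lra.
    + rewrite S_INR, poch_S_base, <- S_INR.
      specialize (IHN (S m)).
      replace (S N + S m)%nat with (S (N + S m)) by lia.
      replace (S N + m)%nat with (N + S m)%nat in IHm by lia.
      change (fact (S m)) with (S m * fact m)%nat in *. rewrite mult_INR in *.
      simpl pow. pose proof (pos_INR (S m)). nra.
Qed.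

Lemma fact_add_le a b : (fact (a + b) <= 2 ^ (a + b) * fact a * fact b)%nat.
Proof.
  remember (a + b)%nat as s eqn:Hs. revert a b Hs.
  induction s as [|s IH]; intros a b Hs.
  - destruct a, b; simpl in *; lia.
  - change (fact (S s)) with (S s * fact s)%nat. rewrite Nat.pow_succ_r'.
    destruct (le_lt_dec b a) as [Hba|Hab].
    + destruct a as [|a]; [lia|].
      specialize (IH a b ltac:(lia)).
      change (fact (S a)) with (S a * fact a)%nat.
      assert (S s <= 2 * S a)%nat by lia. nia.
    + destruct b as [|b]; [lia|].
      specialize (IH a b ltac:(lia)).
      change (fact (S b)) with (S b * fact b)%nat.
      assert (S s <= 2 * S b)%nat by lia. nia.
Qed.

Lemma poch_le_fact_mul a N i m : 0 <= a -> a <= INR N ->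
  poch a (i + m) <= 2 ^ (N + 2 * (i + m)) * (INR (fact i) * INR (fact m)).
Proof.
  intros Ha HaN.
  pose proof (le_INR _ _ (fact_add_le i m)) as Hfact.
  rewrite !mult_INR, pow_INR in Hfact. simpl (INR 2) in Hfact.
  replace (1 + 1) with 2 in Hfact by lra.
  replace (N + 2 * (i + m))%nat with ((N + (i + m)) + (i + m))%nat by lia.
  rewrite pow_add.
  eapply Rle_trans; [apply poch_le_compat; eauto|].
  eapply Rle_trans; [apply poch_INR_le|].
  pose proof (pow_le 2 (N + (i + m)) ltac:(lra)).
  replace (2 ^ (N + (i + m)) * 2 ^ (i + m) * (INR (fact i) * INR (fact m)))
    with (2 ^ (N + (i + m)) * (2 ^ (i + m) * INR (fact i) * INR (fact m))) by ring.
  rewrite Rmult_comm. apply Rmult_le_compat_l; assumption.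
Qed.

Lemma gegen_term_le a N j i t : 0 <= a -> a <= INR N -> Rabs t <= 1 -> (2 * i <= j)%nat ->
  Rabs ((-1) ^ i * poch a (j - i) / (INR (fact i) * INR (fact (j - 2 * i)))
        * (2 * t) ^ (j - 2 * i)) <= 2 ^ N * 8 ^ j.
Proof.
  intros Ha HaN Ht Hij.
  set (m := (j - 2 * i)%nat).
  replace (j - i)%nat with (i + m)%nat by (unfold m; lia).
  assert (HD : 0 < INR (fact i) * INR (fact m)).
  { apply Rmult_lt_0_compat; apply lt_0_INR, lt_O_fact. }
  assert (Hcoef : poch a (i + m) / (INR (fact i) * INR (fact m)) <= 2 ^ (N + 2 * j)).
  { apply Rle_trans with (2 ^ (N + 2 * (i + m))).
    - apply Rmult_le_reg_r with (INR (fact i) * INR (fact m)); [exact HD|].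
      unfold Rdiv. rewrite Rmult_assoc, Rinv_l by lra.
      rewrite Rmult_1_r. now apply poch_le_fact_mul.
    - apply Rle_pow; [lra | unfold m; lia]. }
  assert (Hpow : Rabs ((2 * t) ^ m) <= 2 ^ j).
  { rewrite <- RPow_abs, Rabs_mult, (Rabs_pos_eq 2) by lra.
    apply Rle_trans with (2 ^ m).
    - apply pow_incr. pose proof (Rabs_pos t). lra.
    - apply Rle_pow; [lra | unfold m; lia]. }
  assert (Hcoef0 : 0 <= poch a (i + m) / (INR (fact i) * INR (fact m))).
  { apply Rmult_le_pos; [apply poch_ge0; lra|]. apply Rlt_le, Rinv_0_lt_compat, HD. }
  replace ((-1) ^ i * poch a (i + m) / (INR (fact i) * INR (fact m)) * (2 * t) ^ m)
    with ((-1) ^ i * (poch a (i + m) / (INR (fact i) * INR (fact m)) * (2 * t) ^ m))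
    by (unfold Rdiv; ring).
  rewrite !Rabs_mult, pow_1_abs, Rmult_1_l, (Rabs_pos_eq (_ / _)) by exact Hcoef0.
  replace (2 ^ N * 8 ^ j) with (2 ^ (N + 2 * j) * 2 ^ j).
  2:{ rewrite pow_add, pow_mult. replace 8 with (2 ^ 2 * 2) by lra.
      rewrite Rpow_mult_distr. ring. }
  apply Rmult_le_compat; [exact Hcoef0|apply Rabs_pos|exact Hcoef|exact Hpow].
Qed.

Lemma gegen_abs_le a N j t : 0 <= a -> a <= INR N -> Rabs t <= 1 ->
  Rabs (gegen a j t) <= 2 ^ N * 16 ^ j.
Proof.
  intros Ha HaN Ht. unfold gegen.
  pose proof (Nat.div2_odd j) as Hj.
  eapply Rle_trans; [apply Rsum_abs|].
  eapply Rle_trans.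
  { apply (sum_Rle _ (fun _ => 2 ^ N * 8 ^ j)). intros i Hi.
    apply gegen_term_le; auto. destruct (Nat.odd j); simpl in Hj; lia. }
  rewrite sum_cte.
  assert (Hterms : INR (S (Nat.div2 j)) <= 2 ^ j).
  { rewrite <- (pow_INR 2). apply le_INR.
    pose proof (Nat.pow_gt_lin_r 2 j ltac:(lia)).
    destruct (Nat.odd j); simpl in Hj; lia. }
  replace (2 ^ N * 16 ^ j) with (2 ^ N * 8 ^ j * 2 ^ j).
  2:{ replace 16 with (8 * 2) by lra. rewrite Rpow_mult_distr. ring. }
  apply Rmult_le_compat_l; [|exact Hterms].
  apply Rmult_le_pos; apply pow_le; lra.
Qed.

Lemma gegen_even_0 a l : gegen a (2 * l) 0 = (-1) ^ l * poch a l / INR (fact l).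
Proof.
  unfold gegen. rewrite Nat.div2_double, Rmult_0_r.
  destruct l as [|l]; [simpl; field|].
  change (sum_f_R0 ?f (S l)) with (sum_f_R0 f l + f (S l)).
  rewrite sum_eq_R0 by (intros i Hi; rewrite pow_i by lia; ring).
  replace (2 * S l - S l)%nat with (S l) by lia.
  replace (2 * S l - 2 * S l)%nat with 0%nat by lia.
  simpl (fact 0); simpl (INR 1); simpl (0 ^ 0).
  field. apply INR_fact_neq_0.
Qed.

Lemma fact_le_pow2_poch a l : 1 / 2 <= a -> INR (fact l) <= 2 ^ l * poch a l.
Proof.
  intro Ha. induction l as [|l IH]; [simpl; lra|].
  change (fact (S l)) with (S l * fact l)%nat. rewrite mult_INR, S_INR.
  change (poch a (S l)) with (poch a l * (a + INR l)). simpl pow.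
  pose proof (pos_INR l). pose proof (pos_INR (fact l)).
  assert (0 <= poch a l) by (apply poch_ge0; lra).
  assert (0 <= 2 ^ l) by (apply pow_le; lra).
  apply Rle_trans with (2 * (a + INR l) * INR (fact l)); [apply Rmult_le_compat_r; lra|].
  apply Rle_trans with (2 * (a + INR l) * (2 ^ l * poch a l)); [apply Rmult_le_compat_l; lra|].
  lra.
Qed.

Lemma Rabs_sign_div_gegen_even_0_le a l : 1 / 2 <= a ->
  Rabs ((-1) ^ l / gegen a (2 * l) 0) <= 2 ^ l.
Proof.
  intro Ha. rewrite gegen_even_0.
  pose proof (fact_le_pow2_poch a l Ha) as Hfact.
  pose proof (lt_0_INR _ (lt_O_fact l)) as Hfact0.
  assert (Hp : 0 < poch a l).
  { destruct (Rle_lt_dec (poch a l) 0); auto. pose proof (pow_le 2 l). nra. }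
  replace ((-1) ^ l / ((-1) ^ l * poch a l / INR (fact l))) with (INR (fact l) / poch a l).
  2:{ assert ((-1) ^ l <> 0) by (apply pow_nonzero; lra). field; lra. }
  rewrite Rabs_pos_eq by (apply Rmult_le_pos; [lra|]; apply Rlt_le, Rinv_0_lt_compat, Hp).
  apply Rmult_le_reg_r with (poch a l); [exact Hp|].
  unfold Rdiv. rewrite Rmult_assoc, Rinv_l, Rmult_1_r by lra. exact Hfact.
Qed.

Lemma succ_INR_le_pow2 m : 1 + INR m <= 2 ^ m.
Proof.
  pose proof (Nat.pow_gt_lin_r 2 m ltac:(lia)) as H.
  apply le_INR in H. rewrite S_INR, pow_INR in H. simpl (INR 2) in H.
  replace (1 + 1) with 2 in H by lra. lra.
Qed.

Lemma Rabs_div_le_num a b : 0 <= a -> 1 <= b -> Rabs (a / b) <= a.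
Proof.
  intros Ha Hb.
  rewrite Rabs_pos_eq by (apply Rmult_le_pos; [lra|]; apply Rlt_le, Rinv_0_lt_compat; lra).
  apply Rmult_le_reg_r with b; [lra|].
  unfold Rdiv. rewrite Rmult_assoc, Rinv_l, Rmult_1_r by lra. nra.
Qed.

Lemma Rabs_div_le_1 a b : 0 <= a -> a <= b -> 0 < b -> Rabs (a / b) <= 1.
Proof.
  intros Ha Hab Hb.
  rewrite Rabs_pos_eq by (apply Rmult_le_pos; [lra|]; apply Rlt_le, Rinv_0_lt_compat; lra).
  apply Rmult_le_reg_r with b; [lra|].
  unfold Rdiv. rewrite Rmult_assoc, Rinv_l, Rmult_1_r by lra. lra.
Qed.

Lemma mu_abs_le n k j : (2 <= n)%nat -> Rabs (mu n k j) <= INR n * 8 ^ (k + j).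
Proof.
  intro hn. unfold mu.
  pose proof (Nat.le_div2_diag_l j) as Hl.
  set (l := Nat.div2 j) in *.
  assert (Hn : 2 <= INR n) by (apply (le_INR 2); lia).
  pose proof (pos_INR k). pose proof (pos_INR l). pose proof (le_INR _ _ Hl).
  assert (H2l : 2 ^ l <= 2 ^ (k + j)) by (apply Rle_pow; [lra|lia]).
  assert (H28 : 2 ^ (k + j) <= 8 ^ (k + j)) by (apply pow_incr; lra).
  destruct (Nat.even j).
  - eapply Rle_trans; [apply Rabs_sign_div_gegen_even_0_le; lra|].
    pose proof (pow_le 8 (k + j) ltac:(lra)). nra.
  - set (A := INR n + 2 * INR k + 2 * INR l).
    replace ((-1) ^ l * A / (INR n + 2 * INR k - 1) / gegen ((INR n + 1) / 2 + INR k) (2 * l) 0)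
      with (A / (INR n + 2 * INR k - 1) * ((-1) ^ l / gegen ((INR n + 1) / 2 + INR k) (2 * l) 0))
      by (unfold Rdiv; ring).
    rewrite Rabs_mult.
    assert (HA : Rabs (A / (INR n + 2 * INR k - 1)) <= INR n * 2 ^ (k + j)).
    { eapply Rle_trans; [apply Rabs_div_le_num; unfold A; lra|].
      pose proof (succ_INR_le_pow2 (k + j)) as Hpow. rewrite plus_INR in Hpow.
      unfold A. nra. }
    pose proof (Rabs_sign_div_gegen_even_0_le ((INR n + 1) / 2 + INR k) l ltac:(lra)) as Hg.
    replace (8 ^ (k + j)) with (2 ^ (k + j) * 4 ^ (k + j))
      by (rewrite <- Rpow_mult_distr; f_equal; lra).
    assert (H24 : 2 ^ l <= 4 ^ (k + j)) by (eapply Rle_trans; [exact H2l|apply pow_incr; lra]).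
    rewrite <- Rmult_assoc.
    apply Rmult_le_compat; auto using Rabs_pos; lra.
Qed.

Lemma Rabs_mu_mul_gegen_le n k j a j' t : (2 <= n)%nat -> 0 <= a -> a <= INR (n + k) ->
  (j' <= j)%nat -> Rabs t <= 1 ->
  Rabs (mu n k j * gegen a j' t) <= INR n * 2 ^ n * 128 ^ (k + j).
Proof.
  intros hn Ha HaN Hj Ht. rewrite Rabs_mult.
  pose proof (mu_abs_le n k j hn) as Hmu.
  assert (Hg : Rabs (gegen a j' t) <= 2 ^ n * 16 ^ (k + j)).
  { eapply Rle_trans; [apply gegen_abs_le; eauto|].
    rewrite pow_add, (pow_add 16), Rmult_assoc.
    apply Rmult_le_compat_l; [apply pow_le; lra|].
    apply Rmult_le_compat; try (apply pow_le; lra).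
    - apply pow_incr; lra.
    - apply Rle_pow; [lra|exact Hj]. }
  replace (INR n * 2 ^ n * 128 ^ (k + j)) with (INR n * 8 ^ (k + j) * (2 ^ n * 16 ^ (k + j))).
  2:{ replace 128 with (8 * 16) by lra. rewrite Rpow_mult_distr. ring. }
  apply Rmult_le_compat; auto using Rabs_pos.
Qed.

Lemma sum_lt_ge0 m f : (forall i, 0 <= f i) -> 0 <= sum_lt m f.
Proof. intro Hf; induction m as [|m IH]; simpl; [lra|]. specialize (Hf m); lra. Qed.

Lemma sum_lt_scale_sq m A c v :
  sum_lt m (fun i => (A * (v i / c)) ^ 2) = (A / c) ^ 2 * sum_lt m (fun i => v i ^ 2).
Proof. induction m as [|m IH]; cbn [sum_lt]; [ring|]. rewrite IH. unfold Rdiv; ring. Qed.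

Lemma normx_sq n x0 xv : normx n x0 xv ^ 2 = x0 ^ 2 + sum_lt n (fun i => xv i ^ 2).
Proof.
  unfold normx. rewrite <- Rsqr_pow2, Rsqr_sqrt; [reflexivity|].
  pose proof (sum_lt_ge0 n (fun i => xv i ^ 2) (fun i => pow2_ge_0 _)). nra.
Qed.

(* At [x = 0] the quotient is [0 / 0 = 0], so the bound holds there too. *)
Lemma Rabs_div_normx_le_1 n x0 xv : Rabs (x0 / normx n x0 xv) <= 1.
Proof.
  pose proof (normx_sq n x0 xv) as Hsq.
  pose proof (sum_lt_ge0 n (fun i => xv i ^ 2) (fun i => pow2_ge_0 _)).
  assert (Hc : 0 <= normx n x0 xv) by apply sqrt_pos.
  set (c := normx n x0 xv) in *.
  destruct (Req_dec c 0) as [Hc0|Hc0].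
  - rewrite Hc0. unfold Rdiv. rewrite Rinv_0, Rmult_0_r, Rabs_R0. lra.
  - unfold Rdiv. rewrite Rabs_mult, Rabs_inv, (Rabs_pos_eq c) by lra.
    apply Rmult_le_reg_r with c; [lra|]. rewrite Rmult_assoc, Rinv_l by lra.
    assert (Rabs x0 ^ 2 <= c ^ 2) by (rewrite pow2_abs; lra).
    pose proof (Rabs_pos x0). nra.
Qed.

(* Since [|x_vec| <= |x|], the vector part [A x_vec / |x|] has norm at most [|A|]. *)
Lemma paranorm_le n s A c x0 xv : c ^ 2 = x0 ^ 2 + sum_lt n (fun i => xv i ^ 2) ->
  paranorm n s (fun i => A * (xv i / c)) <= Rabs s + Rabs A.
Proof.
  intro Hc. unfold paranorm. rewrite sum_lt_scale_sq.
  pose proof (sum_lt_ge0 n (fun i => xv i ^ 2) (fun i => pow2_ge_0 _)).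
  set (S := sum_lt n (fun i => xv i ^ 2)) in *.
  assert (HAS : (A / c) ^ 2 * S <= A ^ 2).
  { destruct (Req_dec c 0) as [Hc0|Hc0].
    - rewrite Hc0. unfold Rdiv. rewrite Rinv_0, Rmult_0_r. simpl. nra.
    - assert (Hc2 : 0 < c ^ 2) by (rewrite <- Rsqr_pow2; apply Rsqr_pos_lt, Hc0).
      replace ((A / c) ^ 2 * S) with (A ^ 2 * (S / c ^ 2)) by (field; exact Hc0).
      assert (HS0 : 0 <= S / c ^ 2).
      { apply Rmult_le_pos; [lra|]. apply Rlt_le, Rinv_0_lt_compat, Hc2. }
      assert (HS1 : S / c ^ 2 <= 1).
      { eapply Rle_trans; [apply Rle_abs|]. apply Rabs_div_le_1; nra. }
      pose proof (pow2_ge_0 A). nra. }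
  pose proof (Rabs_pos s); pose proof (Rabs_pos A).
  rewrite <- (sqrt_pow2 (Rabs s + Rabs A)) by lra.
  apply sqrt_le_1_alt.
  rewrite <- (pow2_abs s), <- (pow2_abs A) in *. nra.
Qed.

Lemma normX_0 n k x0 xv : normX n k 0 x0 xv = 1.
Proof.
  unfold normX, paranorm, Xscal, Xvec.
  replace (sum_lt n (fun _ => 0 ^ 2)) with 0
    by (induction n as [|n IH]; cbn [sum_lt]; [reflexivity|rewrite <- IH; ring]).
  rewrite Rplus_0_r, pow1. exact sqrt_1.
Qed.

Lemma normX_S_le n k j x0 xv : (2 <= n)%nat ->
  normX n k (S j) x0 xv <= 2 * (INR n * 2 ^ n * 128 ^ (k + S j)) * normx n x0 xv ^ S j.
Proof.
  intro hn.
  assert (Hn : 2 <= INR n) by (apply (le_INR 2); lia).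
  pose proof (pos_INR k). pose proof (pos_INR (S j)).
  pose proof (Rabs_div_normx_le_1 n x0 xv) as Ht.
  assert (Hcj : 0 <= normx n x0 xv ^ S j) by (apply pow_le, sqrt_pos).
  set (c := normx n x0 xv) in *.
  set (K := INR n * 2 ^ n * 128 ^ (k + S j)).
  set (q := (INR n + 2 * INR k - 1) / (INR n + 2 * INR k + INR (S j) - 1)).
  set (G1 := mu n k (S j) * gegen ((INR n - 1) / 2 + INR k) (S j) (x0 / c)).
  set (G2 := mu n k (S j) * gegen ((INR n + 1) / 2 + INR k) j (x0 / c)).
  assert (Hq : Rabs q <= 1) by (apply Rabs_div_le_1; lra).
  assert (HG1 : Rabs G1 <= K) by (apply Rabs_mu_mul_gegen_le; rewrite ?plus_INR; auto; lra).
  assert (HG2 : Rabs G2 <= K) by (apply Rabs_mu_mul_gegen_le; rewrite ?plus_INR; auto; lra).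
  unfold normX.
  eapply Rle_trans;
    [apply (paranorm_le n _ (mu n k (S j) * c ^ S j * q
      * gegen ((INR n + 1) / 2 + INR k) j (x0 / c)) c x0 xv), normx_sq|].
  replace (mu n k (S j) * c ^ S j * q * gegen ((INR n + 1) / 2 + INR k) j (x0 / c))
    with (q * G2 * c ^ S j) by (unfold G2; ring).
  replace (Xscal n k (S j) x0 xv) with (G1 * c ^ S j) by (unfold Xscal, G1; fold c; ring).
  rewrite !Rabs_mult, (Rabs_pos_eq (c ^ S j)) by exact Hcj.
  pose proof (Rabs_pos q). pose proof (Rabs_pos G2).
  assert (Rabs q * Rabs G2 <= K) by nra.
  nra.
Qed.

Theorem lemma3p3 (n : nat) (hn : (2 <= n)%nat) :
  exists b : R, 0 < b /\
    forall (x0 : R) (xv : nat -> R) (k j : nat),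
      normX n k j x0 xv <= b ^ (k + j) * normx n x0 xv ^ j.
Proof.
  assert (Hn : 2 <= INR n) by (apply (le_INR 2); lia).
  assert (H2n : 1 <= 2 ^ n) by (apply pow_R1_Rle; lra).
  set (a := 2 * INR n * 2 ^ n).
  assert (Ha : 1 <= a) by (unfold a; nra).
  exists (a * 128). split; [lra|].
  intros x0 xv k [|j].
  - rewrite normX_0, Nat.add_0_r, pow_O, Rmult_1_r. apply pow_R1_Rle. lra.
  - eapply Rle_trans; [now apply normX_S_le|].
    assert (Hcj : 0 <= normx n x0 xv ^ S j) by (apply pow_le, sqrt_pos).
    assert (Hpow : a <= a ^ (k + S j)).
    { rewrite <- (pow_1 a) at 1. apply Rle_pow; [exact Ha|lia]. }
    pose proof (pow_le 128 (k + S j) ltac:(lra)).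
    rewrite Rpow_mult_distr.
    apply Rmult_le_compat_r; [exact Hcj|]. unfold a in *. nra.
Qed.
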